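(* In the real plane with Euclidean coordinates $(x,y)$, let $\Gamma$ be a circle, and let $C_1=[1:0:0]$ and $C_2=[\alpha:1:0]$, with $\alpha\ge 0$, be points on the line at infinity (so the line $C_1C_2$ is disjoint from $\Gamma$); let $\mathcal{C}^*$ be the singular dual conic given by $C_1,C_2$. Then the polygonal lines inscribed in $\Gamma$ and circumscribed about $\mathcal{C}^*$ satisfy: (i) there are no such closed polygons with an odd number of sides; (ii) such a polygonal line is closed with $2n$ sides if and only if $$\arctan\left(\frac{1}{\alpha}\right)\in\left\{\frac{k\pi}{n}\ \middle|\ 1\le k<n,\ \gcd(k,n)=1\right\}.$$
   Context: The singular dual conic $\mathcal{C}^*$ given by two distinct points $C_1,C_2$ is the union of the pencils of lines through $C_1$ and through $C_2$; here lines through $C_1$ are the lines parallel to the direction $(1,0)$ and lines through $C_2$ are the lines parallel to the direction $(\alpha,1)$. A polygonal line $A_1A_2\dots$ is inscribed in $\Gamma$ and circumscribed about $\mathcal{C}^*$ if all vertices lie on $\Gamma$ and the sides alternately pass through $C_1$ and $C_2$; it is closed with $N$ sides if $A_{N+1}=A_1$. For $\alpha=0$, $\arctan(1/\alpha)$ is understood as $\pi/2$. *)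

From Stdlib Require Import Reals Lra Arith.
Open Scope R_scope.

Definition point : Type := (R * R)%type.

Definition on_circle (c : point) (r : R) (P : point) : Prop :=
  (fst P - fst c) ^ 2 + (snd P - snd c) ^ 2 = r ^ 2.

(* The line through P and Q (P <> Q) passes through the point at infinity
   [p : q : 0], i.e. it is parallel to the direction (p, q). *)
Definition line_through_inf (P Q : point) (p q : R) : Prop :=
  (fst Q - fst P) * q - (snd Q - snd P) * p = 0.

(* A polygonal line A_1 A_2 ... A_{N+1} with N sides (here A_{i+1} is A i),
   inscribed in the circle (c, r) and circumscribed about the singular dual
   conic given by C1 = [1:0:0] and C2 = [alpha:1:0]: all vertices on the
   circle, consecutive vertices distinct (sides are genuine lines), and the
   sides alternately pass through C1 (sides 1,3,5,...) and C2 (2,4,...). *)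
Definition polygonal_line (c : point) (r alpha : R) (N : nat)
    (A : nat -> point) : Prop :=
  (forall i, (i <= N)%nat -> on_circle c r (A i)) /\
  (forall i, (i < N)%nat ->
     A i <> A (S i) /\
     (if Nat.even i then line_through_inf (A i) (A (S i)) 1 0
      else line_through_inf (A i) (A (S i)) alpha 1)).

Definition closed_with (N : nat) (A : nat -> point) : Prop := A N = A 0%nat.

Definition closed_exactly (N : nat) (A : nat -> point) : Prop :=
  A N = A 0%nat /\ (forall j, (0 < j < N)%nat -> A j <> A 0%nat).

Definition angle_of (alpha : R) : R :=
  if Req_EM_T alpha 0 then PI / 2 else atan (1 / alpha).

(* Translate the centre of the circle to the origin.  Two points of the circle on a line
   of direction (cos a, sin a) are exchanged by the reflection in the diameter orthogonal
   to that direction; sides through C1 have direction angle 0 and sides through C2 have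
   direction angle t = arctan(1/alpha).  Two consecutive sides therefore compose to the
   rotation by 2t, so A_(2m) is A_0 rotated by 2mt: the line closes with exactly 2n sides
   iff n is the least positive integer with sin(nt) = 0, i.e. t = k pi / n with k prime
   to n.  If it closed with 2m+1 sides, the reflection A_0 |-> A_(2m+1) would fix A_0;
   by the resulting symmetry the middle side A_m A_(m+1) would be degenerate. *)

From Stdlib Require Import Reals ZArith Lra Lia.
Open Scope R_scope.

Lemma gcd_eq_1_iff_no_smaller_multiple (k n : nat) : (0 < n)%nat ->
  Nat.gcd k n = 1%nat <-> (forall m, (0 < m < n)%nat -> ~ Nat.divide n (m * k)).
Proof.
  intros Hn; split.
  - intros Hg m Hm Hdiv.
    rewrite Nat.mul_comm in Hdiv.
    apply Nat.gauss in Hdiv; [|now rewrite Nat.gcd_comm].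
    apply Nat.divide_pos_le in Hdiv; lia.
  - intros Hmin.
    destruct (Nat.gcd_divide_l k n) as [k' Hk'].
    destruct (Nat.gcd_divide_r k n) as [n' Hn'].
    set (d := Nat.gcd k n) in *.
    assert (Hdiv : Nat.divide n (n' * k)) by (exists k'; lia).
    assert (n <= n')%nat.
    { destruct (Nat.lt_ge_cases n' n) as [Hlt|]; [|assumption].
      exfalso; apply (Hmin n'); [nia|exact Hdiv]. }
    nia.
Qed.

Lemma sin_mul_rational_PI_eq_0 (m k n : nat) : (0 < n)%nat ->
  sin (INR m * (INR k * PI / INR n)) = 0 <-> Nat.divide n (m * k).
Proof.
  intros Hn.
  assert (HnR : 0 < INR n) by (apply lt_0_INR; exact Hn).
  pose proof PI_RGT_0 as Hpi.
  split.
  - intros Hsin; destruct (sin_eq_0_0 _ Hsin) as [K HK].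
    assert (HZ : INR (m * k) = IZR K * INR n).
    { rewrite mult_INR; apply (Rmult_eq_reg_r (PI / INR n)).
      - replace (INR m * INR k * (PI / INR n)) with (INR m * (INR k * PI / INR n))
          by (field; lra).
        rewrite HK; field; lra.
      - apply Rgt_not_eq, Rdiv_lt_0_compat; lra. }
    rewrite !INR_IZR_INZ, <- mult_IZR in HZ; apply eq_IZR in HZ.
    exists (Z.to_nat K); nia.
  - intros [q Hq]; apply sin_eq_0_1; exists (Z.of_nat q).
    rewrite <- INR_IZR_INZ.
    replace (INR m * (INR k * PI / INR n)) with (INR (m * k) * PI / INR n)
      by (rewrite mult_INR; field; lra).
    rewrite Hq, mult_INR; field; lra.
Qed.

Lemma sin_nat_mul_eq_0_iff (t : R) (n : nat) : 0 < t < PI -> (0 < n)%nat ->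
  sin (INR n * t) = 0 <-> exists k : nat, (1 <= k < n)%nat /\ t = INR k * PI / INR n.
Proof.
  intros Ht Hn.
  assert (HnR : 0 < INR n) by (apply lt_0_INR; exact Hn).
  split.
  - intros Hsin; destruct (sin_eq_0_0 _ Hsin) as [K HK].
    assert (HK0 : (0 < K < Z.of_nat n)%Z).
    { split; apply lt_IZR; [|rewrite <- INR_IZR_INZ]; nra. }
    exists (Z.to_nat K); split; [lia|].
    rewrite INR_IZR_INZ, Z2Nat.id by lia.
    apply (Rmult_eq_reg_l (INR n)); [rewrite HK; field|]; lra.
  - intros [k [_ ->]].
    apply sin_mul_rational_PI_eq_0; [exact Hn|].
    exists k; apply Nat.mul_comm.
Qed.

Lemma first_sin_zero_iff (t : R) (n : nat) : 0 < t < PI -> (0 < n)%nat ->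
  (sin (INR n * t) = 0 /\ (forall m, (0 < m < n)%nat -> sin (INR m * t) <> 0)) <->
  exists k : nat, (1 <= k < n)%nat /\ Nat.gcd k n = 1%nat /\ t = INR k * PI / INR n.
Proof.
  intros Ht Hn; rewrite (sin_nat_mul_eq_0_iff t n Ht Hn); split.
  - intros [[k [Hk ->]] Hfirst].
    exists k; repeat split; try lia.
    apply gcd_eq_1_iff_no_smaller_multiple; [exact Hn|].
    intros m Hm Hdiv; apply (Hfirst m Hm).
    now apply sin_mul_rational_PI_eq_0.
  - intros [k [Hk [Hg ->]]]; split; [now exists k|].
    intros m Hm Hsin; apply sin_mul_rational_PI_eq_0 in Hsin; [|exact Hn].
    exact (proj1 (gcd_eq_1_iff_no_smaller_multiple k n Hn) Hg m Hm Hsin).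
Qed.

Definition vec (c P : point) : point := (fst P - fst c, snd P - snd c).

Definition rot (a : R) (u : point) : point :=
  (cos a * fst u - sin a * snd u, sin a * fst u + cos a * snd u).

Definition mirror (a : R) (u : point) : point :=
  (fst u - 2 * cos a * (cos a * fst u + sin a * snd u),
   snd u - 2 * sin a * (cos a * fst u + sin a * snd u)).

Lemma vec_inj (c P Q : point) : vec c P = vec c Q -> P = Q.
Proof.
  unfold vec; intros H; injection H as Hx Hy.
  apply injective_projections; lra.
Qed.

Lemma rot_0 (u : point) : rot 0 u = u.
Proof.
  unfold rot; rewrite cos_0, sin_0.
  apply injective_projections; simpl; ring.
Qed.

Lemma rot_add (a b : R) (u : point) : rot a (rot b u) = rot (a + b) u.
Proof.
  unfold rot; rewrite cos_plus, sin_plus.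
  apply injective_projections; simpl; ring.
Qed.

Lemma rot_double_fixed_iff (a : R) (u : point) : 0 < fst u ^ 2 + snd u ^ 2 ->
  rot (2 * a) u = u <-> sin a = 0.
Proof.
  destruct u as [x y]; unfold rot; simpl; intros Hu.
  rewrite sin_2a, cos_2a_sin; split.
  - intros H; injection H as Hx Hy.
    assert (E : sin a ^ 2 * (x ^ 2 + y ^ 2) = 0).
    { apply (Rmult_eq_reg_l (-2)); [|lra].
      transitivity (x * ((1 - 2 * sin a * sin a) * x - 2 * sin a * cos a * y - x)
                    + y * (2 * sin a * cos a * x + (1 - 2 * sin a * sin a) * y - y));
        [ring | rewrite Hx, Hy; ring]. }
    apply Rmult_integral in E as [E|E]; [|lra].
    apply Rsqr_0_uniq; unfold Rsqr; lra.
  - intros ->; apply injective_projections; simpl; ring.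
Qed.

Lemma mirror_double_angle (a : R) (u : point) :
  mirror a u = (- (cos (2 * a) * fst u + sin (2 * a) * snd u),
                cos (2 * a) * snd u - sin (2 * a) * fst u).
Proof.
  unfold mirror; rewrite sin_2a; apply injective_projections; simpl.
  - rewrite cos_2a_cos; ring.
  - rewrite cos_2a_sin; ring.
Qed.

Lemma mirror_mirror (a b : R) (u : point) : mirror b (mirror a u) = rot (2 * (b - a)) u.
Proof.
  rewrite !mirror_double_angle; unfold rot.
  replace (2 * (b - a)) with (2 * b - 2 * a) by ring.
  rewrite cos_minus, sin_minus; apply injective_projections; simpl; ring.
Qed.

Lemma mirror_rot (a b : R) (u : point) : mirror a (rot b u) = rot (- b) (mirror a u).
Proof.
  rewrite !mirror_double_angle; unfold rot; rewrite cos_neg, sin_neg.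
  apply injective_projections; simpl; ring.
Qed.

Lemma mirror_rot_half_fixed (a b : R) (u : point) :
  mirror a (rot (2 * b) u) = u -> mirror a (rot b u) = rot b u.
Proof.
  intros Hfix.
  assert (E : rot b u = rot (- b) (rot (2 * b) u)) by (rewrite rot_add; f_equal; ring).
  rewrite E at 1; rewrite mirror_rot, Hfix, Ropp_involutive; reflexivity.
Qed.

Lemma line_through_inf_scale (P Q : point) (p q k : R) :
  line_through_inf P Q p q -> line_through_inf P Q (p * k) (q * k).
Proof.
  unfold line_through_inf; intros H.
  transitivity (((fst Q - fst P) * q - (snd Q - snd P) * p) * k); [ring|].
  rewrite H; ring.
Qed.

Lemma chord_mirror (c : point) (r a : R) (P Q : point) :
  on_circle c r P -> on_circle c r Q -> P <> Q ->
  line_through_inf P Q (cos a) (sin a) -> vec c Q = mirror a (vec c P).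
Proof.
  destruct P as [px py], Q as [qx qy], c as [cx cy].
  unfold on_circle, line_through_inf, vec, mirror; simpl; intros HP HQ HPQ Hline.
  pose proof (sin2_cos2 a) as Hunit; unfold Rsqr in Hunit.
  set (co := cos a) in *; set (s := sin a) in *.
  set (lam := co * (qx - px) + s * (qy - py)).
  assert (Hx : qx - px = lam * co).
  { transitivity ((s * s + co * co) * (qx - px)); [rewrite Hunit; ring|].
    apply Rminus_diag_uniq; unfold lam.
    transitivity (s * ((qx - px) * s - (qy - py) * co)); [ring | rewrite Hline; ring]. }
  assert (Hy : qy - py = lam * s).
  { transitivity ((s * s + co * co) * (qy - py)); [rewrite Hunit; ring|].
    apply Rminus_diag_uniq; unfold lam.
    transitivity (- co * ((qx - px) * s - (qy - py) * co)); [ring | rewrite Hline; ring]. }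
  assert (Hlam : lam <> 0).
  { intro E; apply HPQ; rewrite E in Hx, Hy; f_equal; lra. }
  assert (Hroot : lam * (lam + 2 * (co * (px - cx) + s * (py - cy))) = 0).
  { replace (qx - cx) with (px - cx + lam * co) in HQ by lra.
    replace (qy - cy) with (py - cy + lam * s) in HQ by lra.
    nra. }
  destruct (Rmult_integral _ _ Hroot) as [|Hlam']; [contradiction|].
  apply injective_projections; simpl; nra.
Qed.

Lemma cos_angle_of (alpha : R) : cos (angle_of alpha) = alpha * sin (angle_of alpha).
Proof.
  unfold angle_of; destruct (Req_EM_T alpha 0) as [->|Hne].
  - rewrite cos_PI2; ring.
  - destruct (atan_bound (1 / alpha)) as [Hlo Hhi].
    assert (Hcos : 0 < cos (atan (1 / alpha))) by (apply cos_gt_0; lra).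
    pose proof (tan_atan (1 / alpha)) as Htan; unfold tan in Htan.
    set (t := atan (1 / alpha)) in *.
    assert (Hsin : sin t = cos t * (1 / alpha)) by (rewrite <- Htan; field; lra).
    rewrite Hsin; field; exact Hne.
Qed.

Lemma angle_of_bounds (alpha : R) : 0 <= alpha -> 0 < angle_of alpha < PI.
Proof.
  intros Ha; pose proof PI_RGT_0.
  unfold angle_of; destruct (Req_EM_T alpha 0) as [_|Hne]; [lra|].
  destruct (atan_bound (1 / alpha)).
  split; [|lra].
  rewrite <- atan_0; apply atan_increasing, Rdiv_lt_0_compat; lra.
Qed.

Lemma even_double (m : nat) : Nat.even (2 * m) = true.
Proof. rewrite Nat.even_mul; reflexivity. Qed.

Lemma even_double_succ (m : nat) : Nat.even (S (2 * m)) = false.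
Proof. rewrite Nat.even_succ, Nat.odd_mul; reflexivity. Qed.

Lemma polygonal_line_prefix (c : point) (r alpha : R) (N j : nat) (A : nat -> point) :
  (j <= N)%nat -> polygonal_line c r alpha N A -> polygonal_line c r alpha j A.
Proof.
  intros Hj [Hon Hside]; split; intros i Hi; [apply Hon | apply Hside]; lia.
Qed.

Section Polygon.

Variables (c : point) (r alpha : R) (N : nat) (A : nat -> point).
Hypothesis hA : polygonal_line c r alpha N A.

Lemma polygon_side (i : nat) : (i < N)%nat ->
  vec c (A (S i)) = mirror (if Nat.even i then 0 else angle_of alpha) (vec c (A i)).
Proof.
  intros Hi; destruct hA as [Hon Hside]; destruct (Hside i Hi) as [Hne Hline].
  apply (chord_mirror c r); [apply Hon; lia | apply Hon; lia | exact Hne |].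
  destruct (Nat.even i).
  - rewrite cos_0, sin_0; exact Hline.
  - pose proof (line_through_inf_scale _ _ _ _ (sin (angle_of alpha)) Hline) as H.
    rewrite Rmult_1_l, <- cos_angle_of in H; exact H.
Qed.

Lemma polygon_vertex_even (m : nat) : (2 * m <= N)%nat ->
  vec c (A (2 * m)%nat) = rot (2 * INR m * angle_of alpha) (vec c (A 0%nat)).
Proof.
  induction m as [|m IH]; intros Hm.
  - simpl; rewrite Rmult_0_r, Rmult_0_l, rot_0; reflexivity.
  - replace (2 * S m)%nat with (S (S (2 * m))) by lia.
    rewrite polygon_side, even_double_succ by lia.
    rewrite polygon_side, even_double by lia.
    rewrite mirror_mirror, IH, rot_add by lia.
    f_equal; rewrite S_INR; ring.
Qed.

Lemma polygon_vertex_odd (m : nat) : (2 * m < N)%nat ->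
  vec c (A (S (2 * m))) = mirror 0 (rot (2 * INR m * angle_of alpha) (vec c (A 0%nat))).
Proof.
  intros Hm; rewrite polygon_side, even_double, polygon_vertex_even by lia.
  reflexivity.
Qed.

Lemma polygon_not_closed_odd (m : nat) : N = S (2 * m) -> A N <> A 0%nat.
Proof.
  intros HN Hclosed; destruct hA as [_ Hside].
  set (w := rot (INR m * angle_of alpha) (vec c (A 0%nat))).
  assert (Hw : mirror 0 w = w).
  { apply mirror_rot_half_fixed.
    rewrite <- Rmult_assoc, <- polygon_vertex_odd by lia.
    rewrite <- HN, Hclosed; reflexivity. }
  destruct (Nat.Even_or_Odd m) as [[j ->]|[j ->]].
  - destruct (Hside (2 * j)%nat ltac:(lia)) as [Hne _]; apply Hne, (vec_inj c).
    rewrite polygon_vertex_odd, polygon_vertex_even by lia.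
    replace (2 * INR j) with (INR (2 * j)) by (rewrite mult_INR; reflexivity).
    exact (eq_sym Hw).
  - destruct (Hside (S (2 * j)) ltac:(lia)) as [Hne _]; apply Hne, (vec_inj c).
    replace (S (S (2 * j))) with (2 * S j)%nat by lia.
    rewrite polygon_vertex_odd, polygon_vertex_even by lia.
    assert (Hprev : rot (2 * INR j * angle_of alpha) (vec c (A 0%nat))
                    = rot (- angle_of alpha) w).
    { unfold w; rewrite rot_add; f_equal; rewrite plus_INR, mult_INR; simpl; ring. }
    assert (Hnext : rot (2 * INR (S j) * angle_of alpha) (vec c (A 0%nat))
                    = rot (angle_of alpha) w).
    { unfold w; rewrite rot_add; f_equal; rewrite S_INR, plus_INR, mult_INR; simpl; ring. }
    rewrite Hprev, Hnext, mirror_rot, Hw, Ropp_involutive; reflexivity.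
Qed.

Lemma polygon_vertex_even_eq_start_iff (m : nat) : 0 < r -> (2 * m <= N)%nat ->
  A (2 * m)%nat = A 0%nat <-> sin (INR m * angle_of alpha) = 0.
Proof.
  intros hr Hm.
  assert (Hu : 0 < fst (vec c (A 0%nat)) ^ 2 + snd (vec c (A 0%nat)) ^ 2).
  { destruct hA as [Hon _]; specialize (Hon 0%nat ltac:(lia)).
    unfold on_circle in Hon; unfold vec; cbn [fst snd]; rewrite Hon; nra. }
  rewrite <- (rot_double_fixed_iff _ _ Hu), <- Rmult_assoc, <- polygon_vertex_even by exact Hm.
  split; [intros ->; reflexivity | apply vec_inj].
Qed.

End Polygon.

Lemma closed_exactly_even_iff (c : point) (r alpha : R) (n : nat) (A : nat -> point) :
  0 < r -> polygonal_line c r alpha (2 * n) A ->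
  closed_exactly (2 * n) A <->
  (sin (INR n * angle_of alpha) = 0 /\
   forall m, (0 < m < n)%nat -> sin (INR m * angle_of alpha) <> 0).
Proof.
  intros hr hA; unfold closed_exactly.
  rewrite (polygon_vertex_even_eq_start_iff c r alpha _ A hA n hr) by lia.
  split; intros [Hclosed Hfirst]; split; try exact Hclosed.
  - intros m Hm Hsin; apply (Hfirst (2 * m)%nat); [lia|].
    apply (polygon_vertex_even_eq_start_iff c r alpha _ A hA); [exact hr | lia | exact Hsin].
  - intros j Hj Hback; destruct (Nat.Even_or_Odd j) as [[m ->]|[m ->]].
    + apply (Hfirst m); [lia|].
      apply (polygon_vertex_even_eq_start_iff c r alpha _ A hA); [exact hr | lia | exact Hback].
    + apply (polygon_not_closed_odd c r alpha (2 * m + 1) A) with (m := m); [|lia|exact Hback].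
      apply (polygonal_line_prefix c r alpha (2 * n)); [lia | exact hA].
Qed.

Theorem proposition3p7 (c : point) (r alpha : R) (hr : 0 < r) (halpha : 0 <= alpha) :
  (forall (N : nat) (A : nat -> point),
     Nat.odd N = true -> polygonal_line c r alpha N A -> ~ closed_with N A) /\
  (forall (n : nat) (A : nat -> point),
     (1 <= n)%nat -> polygonal_line c r alpha (2 * n) A ->
     (closed_exactly (2 * n) A <->
      exists k : nat, (1 <= k < n)%nat /\ Nat.gcd k n = 1%nat /\
                      angle_of alpha = INR k * PI / INR n)).
Proof.
  split.
  - intros N A Hodd hA; apply Nat.odd_spec in Hodd as [m HN].
    apply (polygon_not_closed_odd c r alpha N A hA m); lia.
  - intros n A Hn hA.
    rewrite (closed_exactly_even_iff c r alpha n A hr hA).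
    apply first_sin_zero_iff; [apply angle_of_bounds, halpha | lia].
Qed.
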